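(* Let $n\ge 3$ and let $\mathbf{x}$ be a fractional vertex of $P^n_{\mathrm{SEP}}$. Then $|E_{\mathbf{x}}|\ge n+3$.
   Context: $K_n=(V_n,E_n)$ is the complete undirected graph on $n$ nodes; $\delta(S)$ is the set of edges with exactly one endpoint in $S\subseteq V_n$. $P^n_{\mathrm{SEP}}=\{\mathbf{x}\in\mathbb{R}^{E_n} : \sum_{e\in\delta(v)}x_e=2\ \forall v;\ \sum_{e\in\delta(S)}x_e\ge 2\ \forall S \text{ with } 3\le|S|\le n-3;\ 0\le x_e\le 1\}$. A vertex is an extreme point of $P^n_{\mathrm{SEP}}$; it is fractional if it is not integral. $E_{\mathbf{x}}=\{e\in E_n: x_e>0\}$ is the edge set of the support graph of $\mathbf{x}$. *)

From mathcomp Require Import all_boot all_order all_algebra.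
From mathcomp Require Import reals.
Set Implicit Arguments. Unset Strict Implicit. Unset Printing Implicit Defensive.
Import Order.TTheory GRing.Theory Num.Theory.
Local Open Scope ring_scope.

Definition edge (n : nat) := {e : {set 'I_n} | #|e| == 2%N}.

Definition in_cut (n : nat) (S : {set 'I_n}) (e : edge n) : bool :=
  #|val e :&: S| == 1%N.

Definition cut_val (R : realType) (n : nat) (x : edge n -> R) (S : {set 'I_n}) : R :=
  \sum_(e : edge n | in_cut S e) x e.

Definition in_PSEP (R : realType) (n : nat) (x : edge n -> R) : Prop :=
  [/\ forall v : 'I_n, cut_val x [set v] = 2,
      forall S : {set 'I_n}, (3 <= #|S|)%N -> (#|S| <= n - 3)%N -> 2 <= cut_val x S
    & forall e : edge n, 0 <= x e <= 1].

Definition is_vertex_PSEP (R : realType) (n : nat) (x : edge n -> R) : Prop :=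
  in_PSEP x /\
  forall (y z : edge n -> R) (t : R), in_PSEP y -> in_PSEP z -> 0 < t < 1 ->
    (forall e, x e = t * y e + (1 - t) * z e) -> (forall e, y e = z e).

Definition fractional (R : realType) (n : nat) (x : edge n -> R) : Prop :=
  ~ (forall e : edge n, x e \is a Num.int).

Definition support_edges (R : realType) (n : nat) (x : edge n -> R) : {set edge n} :=
  [set e | 0 < x e].

From mathcomp Require Import all_boot all_order all_algebra.
From mathcomp Require Import reals.
From mathcomp Require Import ring lra zify.
Set Implicit Arguments. Unset Strict Implicit. Unset Printing Implicit Defensive.
Import Order.TTheory GRing.Theory Num.Theory.
Local Open Scope ring_scope.

(* Call a node fractional if it meets an edge e with 0 < x_e < 1, and let W be
   the set of fractional nodes.  Since x(delta(v)) = 2 with 0 <= x <= 1, every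
   node has support degree at least 2, and a fractional node meets at most one
   edge with x_e = 1 and has support degree at least 3; the handshake lemma then
   gives 2|E_x| >= 2n + |W|, so it suffices to show |W| >= 5.  A fractional node
   has at least two fractional neighbours, hence |W| >= 3.  If |W| = 3, every
   node of W meets exactly one unit edge and every other node meets two, which
   contradicts the parity of the number of endpoints of unit edges.  If |W| = 4,
   the fractional edges contain a 4-cycle a-c-b-d through all of W.  Moving x by
   +-eps alternately around this cycle keeps all degrees, and the only subtour
   constraints it can decrease are those of sets S meeting W in the ends of a
   cycle edge f; for these a count of the unit edges inside S shows
   x(delta(S)) >= 4 - 2 x_f.  So x is the midpoint of two distinct points of
   P_SEP and is not a vertex. *)

Lemma sum_nat_mem (T : finType) (P : pred T) (A : {set T}) :
  (\sum_(t | P t) (t \in A) = #|[set t in A | P t]|)%N.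
Proof.
rewrite -sum1_card [RHS]big_mkcond [LHS]big_mkcond /=.
by apply: eq_bigr => t _; rewrite !inE andbC; case: (P t); case: (t \in A).
Qed.

Section CompleteGraph.
Variable n : nat.
Implicit Types (e : edge n) (u v w : 'I_n) (S : {set 'I_n}) (A B : {set edge n}).

Lemma card_edge e : #|val e| = 2%N.
Proof. exact/eqP/(valP e). Qed.

Lemma edge_pair_neq e u v : val e = [set u; v] -> u != v.
Proof. by move=> eE; have := card_edge e; rewrite eE cards2; case: (u != v). Qed.

Lemma edge_pairE e u v : u != v -> u \in val e -> v \in val e -> val e = [set u; v].
Proof.
move=> uv ue ve; apply/esym/eqP; rewrite eqEcard cards2 uv card_edge leqnn andbT.
by apply/subsetP=> w; rewrite !inE => /orP[]/eqP->.
Qed.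

Lemma card_edgeI e S : #|val e :&: S| = (\sum_(w in val e) (w \in S))%N.
Proof. by rewrite (sum_nat_mem (mem (val e))); apply: eq_card => w; rewrite !inE andbC. Qed.

Lemma in_cut1 v e : in_cut [set v] e = (v \in val e).
Proof.
rewrite /in_cut; have [ve|ve] := boolP (v \in val e).
  by rewrite (setIidPr _) ?cards1 ?sub1set.
rewrite (_ : _ :&: _ = set0) ?cards0 //.
by apply/setP=> w; rewrite !inE; case: eqP => [->|_]; rewrite ?andbF ?(negbTE ve).
Qed.

Lemma in_cut_pair S e u v : val e = [set u; v] -> in_cut S e = ((u \in S) != (v \in S)).
Proof.
move=> eE; have uv := edge_pair_neq eE.
rewrite /in_cut card_edgeI eE big_setU1 ?big_set1 ?inE //=.
by case: (u \in S); case: (v \in S).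
Qed.

Definition other_end v e := odflt v [pick u in val e :\ v].

Lemma other_endP v e : v \in val e ->
  other_end v e != v /\ val e = [set v; other_end v e].
Proof.
move=> ve; rewrite /other_end; case: pickP => [u|none] /=.
  by rewrite !inE => /andP[uv ue]; split=> //; apply: edge_pairE; rewrite // eq_sym.
have := cardsD1 v (val e); rewrite ve card_edge (eq_card0 none) //.
Qed.

Lemma other_end_inj v A : {in [set e in A | v \in val e] &, injective (other_end v)}.
Proof.
move=> e1 e2; rewrite !inE => /andP[_ /other_endP[_ e1E]] /andP[_ /other_endP[_ e2E]] o12.
by apply: val_inj; rewrite e1E e2E o12.
Qed.

Definition degree A v := #|[set e in A | v \in val e]|.

Lemma degreeU A B v : [disjoint A & B] ->
  degree (A :|: B) v = (degree A v + degree B v)%N.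
Proof.
move=> AB; rewrite /degree -cardsUI.
rewrite (_ : _ :&: _ = set0) ?cards0 ?addn0; last first.
  apply/setP=> e; rewrite !inE andbACA; case eA: (e \in A) => //=.
  by rewrite (disjointFr AB eA).
by congr (#|pred_of_set _|); apply/setP=> e; rewrite !inE andb_orl.
Qed.

Lemma sub_edgeE e S : (val e \subset S) = (#|val e :&: S| == 2%N).
Proof.
apply/setIidPl/eqP => [->|]; first exact: card_edge.
by move=> eS; apply/eqP; rewrite eqEcard subsetIl card_edge eS.
Qed.

Lemma sum_incident (V : nmodType) (g : edge n -> V) S :
  \sum_(v in S) \sum_(e : edge n | v \in val e) g e =
  \sum_(e | in_cut S e) g e + (\sum_(e : edge n | val e \subset S) g e) *+ 2.
Proof.
under eq_bigr do rewrite big_mkcond /=.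
rewrite exchange_big /= -sumrMnl [in RHS]big_mkcond [X in _ + X]big_mkcond -big_split /=.
apply: eq_bigr => e _; rewrite -big_mkcondr /= sumr_const /in_cut sub_edgeE.
have -> : #|[pred v in S | v \in val e]| = #|val e :&: S|.
  by apply: eq_card => v; rewrite !inE andbC.
have := subset_leq_card (subsetIl (val e) S); rewrite card_edge.
by case: #|_| => [|[|[|]]] //= _; rewrite ?addr0 ?add0r.
Qed.

Lemma sum_degree S A : (\sum_(v in S) degree A v =
  #|[set e in A | in_cut S e]| + 2 * #|[set e in A | val e \subset S]|)%N.
Proof.
have eq2 : (\sum_(v in S) \sum_(e : edge n | v \in val e) (e \in A) =
    \sum_(e | in_cut S e) (e \in A) + 2 * \sum_(e : edge n | val e \subset S) (e \in A))%N.
  by rewrite mul2n -addnn; exact: (sum_incident (fun e => nat_of_bool (e \in A)) S).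
by rewrite -!sum_nat_mem -eq2; apply: eq_bigr => v _; rewrite sum_nat_mem.
Qed.

Lemma sum_degreeT A : (\sum_v degree A v = 2 * #|A|)%N.
Proof.
rewrite (eq_bigl (fun v => v \in [set: 'I_n])) => [|v]; last by rewrite inE.
rewrite sum_degree (_ : [set e in A | in_cut _ e] = set0) ?cards0; last first.
  by apply/setP=> e; rewrite !inE /in_cut setIT card_edge andbF.
by rewrite (_ : [set e in A | _] = A) //; apply/setP=> e; rewrite !inE subsetT andbT.
Qed.

End CompleteGraph.

Lemma sum_indicator (V : pzSemiRingType) (T : finType) (P : pred T) (f : T) :
  \sum_(t | P t) ((t == f)%:R : V) = (P f)%:R.
Proof.
rewrite big_mkcond (bigD1 f) //= eqxx big1 ?addr0 => [|t /negbTE->]; last by case: (P t).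
by case: (P f).
Qed.

Section SubtourPoint.
Variables (R : realType) (n : nat) (x : edge n -> R).
Hypothesis x_in : in_PSEP x.
Implicit Types (e : edge n) (u v w : 'I_n) (S : {set 'I_n}).

Lemma x_bounds e : 0 <= x e <= 1.
Proof. by case: x_in. Qed.

Lemma sum_x_incident v : \sum_(e : edge n | v \in val e) x e = 2.
Proof. by case: x_in => /(_ v) <- _ _; apply: eq_bigl => e; rewrite in_cut1. Qed.

Definition unit_edges := [set e : edge n | x e == 1].
Definition frac_edges := [set e : edge n | 0 < x e < 1].
Definition frac_nodes := [set v : 'I_n | (0 < degree frac_edges v)%N].
Definition frac_nbrs v := other_end v @: [set e in frac_edges | v \in val e].

Lemma x_split e : x e = (e \in unit_edges)%:R + (if e \in frac_edges then x e else 0).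
Proof.
rewrite !inE; have /andP[x0 x1] := x_bounds e.
have [->|x_neq1] := eqVneq (x e) 1; first by rewrite ltxx andbF addr0.
rewrite add0r (lt_neqAle (x e)) x_neq1 x1 andbT.
by case: ltrP => // xle0; apply/eqP; rewrite eq_le xle0 x0.
Qed.

Lemma sum_x_split (P : pred (edge n)) :
  \sum_(e | P e) x e = #|[set e in unit_edges | P e]|%:R +
                       \sum_(e in [set e in frac_edges | P e]) x e.
Proof.
under eq_bigr do rewrite x_split.
rewrite big_split /= -sum_nat_mem natr_sum -big_mkcondr /=; congr (_ + _).
by apply: eq_bigl => e; rewrite !inE andbC.
Qed.

Lemma sum_frac_bounds (P : pred (edge n)) :
  [set e in frac_edges | P e] != set0 ->
  0 < \sum_(e in [set e in frac_edges | P e]) x e < #|[set e in frac_edges | P e]|%:R.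
Proof.
move=> /set0Pn[e0 e0F].
have hasF : has (mem [set e in frac_edges | P e]) (index_enum (edge n)).
  by apply/hasP; exists e0; rewrite ?mem_index_enum.
have x01 e : e \in [set e in frac_edges | P e] -> 0 < x e < 1 by rewrite !inE => /andP[].
rewrite -sumr_const; apply/andP; split.
  apply: le_lt_trans (@ltr_sum _ _ _ _ (fun=> 0) _ hasF _); first by rewrite big1_eq.
  by move=> e /x01/andP[].
by apply: ltr_sum hasF _ => e /x01/andP[].
Qed.

Lemma unit_frac_degree v :
  (degree unit_edges v)%:R + \sum_(e in [set e in frac_edges | v \in val e]) x e = 2.
Proof. by rewrite -sum_x_split sum_x_incident. Qed.

Lemma mem_frac_nodes e v : e \in frac_edges -> v \in val e -> v \in frac_nodes.
Proof. by move=> ef ve; rewrite inE card_gt0; apply/set0Pn; exists e; rewrite inE ef. Qed.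

Lemma degree_frac_node v : v \in frac_nodes ->
  (degree unit_edges v <= 1)%N /\ (3 <= degree unit_edges v + degree frac_edges v)%N.
Proof.
rewrite inE card_gt0 => F0; have := unit_frac_degree v.
have /andP[] := sum_frac_bounds F0.
rewrite /degree; set f := #|_|; set k := #|_| => s_gt0 s_lt k_s.
have /[!ltr_nat] k_lt2 : k%:R < 2%:R :> R by lra.
have /[!ltr_nat] kf_gt2 : 2%:R < (k + f)%N%:R :> R by rewrite natrD; lra.
by split; lia.
Qed.

Lemma unit_degree_le2 v : (degree unit_edges v <= 2)%N.
Proof.
have := unit_frac_degree v; rewrite -(ler_nat R).
have : 0 <= \sum_(e in [set e in frac_edges | v \in val e]) x e.
  by apply: sumr_ge0 => e _; have /andP[] := x_bounds e.
lra.
Qed.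

Lemma unit_degree_nonfrac v : v \notin frac_nodes -> degree unit_edges v = 2%N.
Proof.
rewrite inE -eqn0Ngt cards_eq0 => /eqP F0.
have := unit_frac_degree v; rewrite F0 big_set0 addr0 => k2.
by apply/eqP; rewrite -(eqr_nat R) k2.
Qed.

Lemma support_edgesE : support_edges x = unit_edges :|: frac_edges.
Proof.
apply/setP=> e; rewrite /support_edges !inE; have /andP[_ x1] := x_bounds e.
have [->|x_neq1] /= := eqVneq (x e) 1; first by rewrite ltr01.
have -> : x e < 1 by rewrite lt_neqAle x_neq1 x1.
by rewrite andbT.
Qed.

Lemma disjoint_unit_frac : [disjoint unit_edges & frac_edges].
Proof. by rewrite disjoint_subset; apply/subsetP=> e; rewrite !inE => /eqP->; rewrite ltxx andbF. Qed.

Lemma support_degree_ge v : (2 + (v \in frac_nodes) <= degree (support_edges x) v)%N.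
Proof.
rewrite support_edgesE degreeU ?disjoint_unit_frac //.
have [vW|vW] := boolP (v \in frac_nodes); last by rewrite unit_degree_nonfrac.
by have [] := degree_frac_node vW.
Qed.

Lemma card_support_lb : (2 * n + #|frac_nodes| <= 2 * #|support_edges x|)%N.
Proof.
rewrite -sum_degreeT; apply: leq_trans (leq_sum _ (fun v _ => support_degree_ge v)).
rewrite big_split /= sum_nat_const card_ord mulnC leq_add2l -sum1_card big_mkcond.
by apply: leq_sum => v _; case: (v \in frac_nodes).
Qed.

Lemma card_frac_nbrs v : #|frac_nbrs v| = degree frac_edges v.
Proof. exact: card_in_imset (@other_end_inj _ v frac_edges). Qed.

Lemma frac_nbrsP v u :
  reflect (exists2 e, e \in frac_edges & val e = [set v; u]) (u \in frac_nbrs v).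
Proof.
apply: (iffP imsetP) => [[e]|[e ef eE]].
  by rewrite inE => /andP[ef /other_endP[_ eE]] ->; exists e.
have ve : v \in val e by rewrite eE set21.
exists e; first by rewrite inE ef ve.
have [_ oE] := other_endP ve.
have : u \in [set v; other_end v e] by rewrite -oE eE set22.
by rewrite in_set2 eq_sym (negbTE (edge_pair_neq eE)) => /eqP.
Qed.

Lemma frac_nbrsC u v : (u \in frac_nbrs v) = (v \in frac_nbrs u).
Proof. by apply/frac_nbrsP/frac_nbrsP => -[e ef eE]; exists e; rewrite // eE setUC. Qed.

Lemma frac_nbrs_sub v : frac_nbrs v \subset frac_nodes :\ v.
Proof.
apply/subsetP=> u /frac_nbrsP[e ef eE].
by rewrite in_setD1 eq_sym (edge_pair_neq eE) (mem_frac_nodes ef) // eE set22.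
Qed.

Lemma frac_degree_le v : (degree frac_edges v <= #|frac_nodes :\ v|)%N.
Proof. by rewrite -card_frac_nbrs subset_leq_card ?frac_nbrs_sub. Qed.

Lemma frac_nodes_neq0 : fractional x -> frac_nodes != set0.
Proof.
move=> xfrac; have /set0Pn[f ff] : frac_edges != set0.
  apply/negP => /eqP F0; apply: xfrac => e.
  have /andP[x0 x1] := x_bounds e.
  have : e \notin frac_edges by rewrite F0 inE.
  rewrite inE negb_and -!leNgt => /orP[x_le0|x_ge1].
    by rewrite (_ : x e = 0) ?int_num0 //; apply/eqP; rewrite eq_le x_le0 x0.
  by rewrite (_ : x e = 1) ?int_num1 //; apply/eqP; rewrite eq_le x_ge1 x1.
have /card_gt0P[v vf] : (0 < #|val f|)%N by rewrite card_edge.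
by apply/set0Pn; exists v; apply: mem_frac_nodes vf.
Qed.

Lemma card_frac_nodes_ge3 : frac_nodes != set0 -> (3 <= #|frac_nodes|)%N.
Proof.
move=> /set0Pn[v vW]; have [] := degree_frac_node vW.
by have := frac_degree_le v; have := cardsD1 v frac_nodes; rewrite vW; lia.
Qed.

Lemma card_frac_nodes_neq3 : #|frac_nodes| != 3%N.
Proof.
apply/eqP => W3.
have unit1 v : v \in frac_nodes -> degree unit_edges v = 1%N.
  move=> vW; have [] := degree_frac_node vW; have := frac_degree_le v.
  by have := cardsD1 v frac_nodes; rewrite vW W3; lia.
have := sum_degreeT unit_edges; rewrite (bigID (mem frac_nodes)) /=.
rewrite (eq_bigr (fun=> 1%N)) => [|v /unit1 //]; rewrite sum1_card W3.
rewrite (eq_bigr (fun=> 2 * 1)%N) => [|v /unit_degree_nonfrac //]; rewrite -big_distrr /=.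
lia.
Qed.

Lemma frac_nodes4_split p q : #|frac_nodes| = 4%N ->
  p \in frac_nodes -> q \in frac_nodes -> p != q ->
  exists c d, [/\ c != d, frac_nodes :\ p :\ q = [set c; d]
                & {subset frac_nodes <= [:: p; q; c; d]}].
Proof.
move=> W4 pW qW pq.
have /cards2P[c [d [cd cdE]]] : #|frac_nodes :\ p :\ q| == 2%N.
  have := cardsD1 q (frac_nodes :\ p); have := cardsD1 p frac_nodes.
  by rewrite pW in_setD1 eq_sym pq qW; lia.
exists c, d; split=> // w wW; rewrite !inE.
have [//|wp] := eqVneq w p; have [//|wq] /= := eqVneq w q.
by rewrite -in_set2 -cdE !in_setD1 wp wq wW.
Qed.

Lemma frac_nbrs_nonadjacent p q : #|frac_nodes| = 4%N ->
  p \in frac_nodes -> q \in frac_nodes -> p != q -> q \notin frac_nbrs p ->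
  frac_nbrs p = frac_nodes :\ p :\ q.
Proof.
move=> W4 pW qW pq qNp; apply/eqP; rewrite eqEcard; apply/andP; split.
  apply/subsetP=> u up; rewrite in_setD1 (subsetP (frac_nbrs_sub p) u up) andbT.
  by apply: contraNneq qNp => <-.
rewrite card_frac_nbrs; have [] := degree_frac_node pW.
have := cardsD1 q (frac_nodes :\ p); have := cardsD1 p frac_nodes.
by rewrite pW in_setD1 eq_sym pq qW; lia.
Qed.

Lemma frac_nodes4_cycle : #|frac_nodes| = 4%N -> exists a b c d,
  [/\ a != b, c != d, {subset frac_nodes <= [:: a; b; c; d]},
      [set c; d] \subset frac_nbrs a & [set c; d] \subset frac_nbrs b].
Proof.
move=> W4.
have [/existsP[p /existsP[q /and4P[pW qW pq qNp]]]|all_adj] := boolP [exists p, exists q,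
    [&& p \in frac_nodes, q \in frac_nodes, p != q & q \notin frac_nbrs p]].
  have [c [d [cd cdE Wsub]]] := frac_nodes4_split W4 pW qW pq.
  exists p, q, c, d; split=> //; rewrite -cdE.
    by rewrite -frac_nbrs_nonadjacent.
  have -> : frac_nodes :\ p :\ q = frac_nodes :\ q :\ p by rewrite !setDDl setUC.
  by rewrite -frac_nbrs_nonadjacent // 1?eq_sym // -frac_nbrsC.
have [p pW] : exists p, p \in frac_nodes by apply/set0Pn; rewrite -card_gt0 W4.
have [q] : exists q, q \in frac_nodes :\ p.
  by apply/set0Pn; rewrite -card_gt0; have := cardsD1 p frac_nodes; rewrite pW W4; lia.
rewrite in_setD1 eq_sym => /andP[pq qW].
have [c [d [cd cdE Wsub]]] := frac_nodes4_split W4 pW qW pq.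
have adj u v : u \in frac_nodes -> v \in frac_nodes -> u != v -> v \in frac_nbrs u.
  move=> uW vW uv; apply: contraNT all_adj => vNu.
  by apply/existsP; exists u; apply/existsP; exists v; rewrite uW vW uv vNu.
exists p, q, c, d; split=> //; rewrite -cdE; apply/subsetP=> u;
  by rewrite !in_setD1 => /and3P[uq up uW]; apply: adj; rewrite // eq_sym.
Qed.

Lemma sum_unit_degree_le S u v : u != v -> u \in frac_nodes -> v \in frac_nodes ->
  u \in S -> v \in S -> (\sum_(w in S) degree unit_edges w + 2 <= 2 * #|S|)%N.
Proof.
move=> uv uW vW uS vS.
have vSu : v \in S :\ u by rewrite in_setD1 eq_sym uv.
have -> : (\sum_(w in S) degree unit_edges w = degree unit_edges u + degree unit_edges v
           + \sum_(w in S :\ u :\ v) degree unit_edges w)%N.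
  by rewrite (big_setD1 u uS) (big_setD1 v vSu) /= addnA.
have -> : #|S| = (#|S :\ u :\ v| + 2)%N.
  by rewrite (cardsD1 u S) (cardsD1 v (S :\ u)) uS vSu /= !add1n addn2.
have : (\sum_(w in S :\ u :\ v) degree unit_edges w <= 2 * #|S :\ u :\ v|)%N.
  by rewrite mulnC -sum_nat_const; apply: leq_sum => w _; apply: unit_degree_le2.
by have [] := degree_frac_node uW; have [] := degree_frac_node vW; lia.
Qed.

(* With k unit edges inside S, x(E(S)) = k + x_f and x(delta(S)) = 2|S| - 2 x(E(S)).
   Counting unit degrees gives k <= |S| - 1, and k = |S| - 1 would force
   x(delta(S)) = 2 - 2 x_f < 2. *)
Lemma cut_frac_pair_bound S u v f :
  f \in frac_edges -> val f = [set u; v] -> u \in S -> v \in S ->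
  (forall w, w \in frac_nodes -> w \in S -> (w == u) || (w == v)) ->
  2 <= cut_val x S -> 4 - 2 * x f <= cut_val x S.
Proof.
move=> ff fE uS vS SW cut_ge2; have uv := edge_pair_neq fE.
have uW : u \in frac_nodes by apply: (mem_frac_nodes ff); rewrite fE set21.
have vW : v \in frac_nodes by apply: (mem_frac_nodes ff); rewrite fE set22.
set k := #|[set e in unit_edges | val e \subset S]|.
have inside : \sum_(e : edge n | val e \subset S) x e = k%:R + x f.
  rewrite sum_x_split (eq_bigl (pred1 f)) ?big_pred1_eq // => e; rewrite inE /=.
  apply/andP/eqP => [[ef eS]|->]; last by rewrite ff fE subUset !sub1set uS vS.
  apply: val_inj; rewrite fE; apply/eqP; rewrite eqEcard card_edge cards2 uv andbT.
  by apply/subsetP=> w we; rewrite in_set2; apply: SW (mem_frac_nodes ef we) (subsetP eS w we).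
have degsum : #|S|%:R * 2 = cut_val x S + (k%:R + x f) *+ 2.
  rewrite -inside /cut_val mulr_natl -sum_incident -sumr_const.
  by apply: eq_bigr => w _; rewrite sum_x_incident.
have := sum_unit_degree_le uv uW vW uS vS; rewrite sum_degree -/k => k_le.
have x_gt0 : 0 < x f by move: ff; rewrite inE => /andP[].
have [k_eq|k_lt] : (k + 1 = #|S|)%N \/ (k + 2 <= #|S|)%N by lia.
  have : k%:R + 1 = #|S|%:R :> R by rewrite -k_eq natrD.
  by rewrite mulr2n in degsum; lra.
have : k%:R + 2 <= #|S|%:R :> R by rewrite -natrD ler_nat.
by rewrite mulr2n in degsum; lra.
Qed.

Lemma frac_edges_slack (s : seq (edge n)) : {subset s <= frac_edges} ->
  exists2 eps : R, 0 < eps & forall e, e \in s -> eps <= x e /\ eps <= 1 - x e.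
Proof.
elim: s => [|f s IH] sub; first by exists 1.
have /IH[eps eps_gt0 eps_le] : {subset s <= frac_edges}.
  by move=> e es; apply: sub; rewrite in_cons es orbT.
have := sub f (mem_head f s); rewrite inE => /andP[xf0 xf1].
exists (Num.min eps (Num.min (x f) (1 - x f))).
  by rewrite !lt_min eps_gt0 xf0 subr_gt0 xf1.
move=> e; rewrite in_cons => /orP[/eqP->|es]; first by rewrite !ge_min !lexx !orbT.
by have [e0 e1] := eps_le e es; rewrite !ge_min e0 e1.
Qed.

End SubtourPoint.

Lemma vertex_perturbation_eq0 (R : realType) (n : nat) (x d : edge n -> R) (eps : R) :
  is_vertex_PSEP x -> eps != 0 ->
  in_PSEP (fun e => x e + eps * d e) -> in_PSEP (fun e => x e + - eps * d e) ->
  forall e, d e = 0.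
Proof.
move=> [_ x_ext] eps0 x_plus x_minus e.
have half : 0 < (2^-1 : R) < 1 by rewrite invr_gt0 invf_lt1 ltr0n ?ltr1n.
have avg f : x f = 2^-1 * (x f + eps * d f) + (1 - 2^-1) * (x f + - eps * d f).
  by field.
have := x_ext _ _ _ x_plus x_minus half avg e.
move=> /addrI /eqP; rewrite mulNr -addr_eq0 -mulr2n mulrn_eq0 /= mulf_eq0 (negbTE eps0).
by move=> /eqP.
Qed.

Lemma crossing_bound (R : realDomainType) (A B C D : bool) (cut t m : R) :
  `|t| <= m -> (if (A != B) && (C != D) then 2 + 2 * m else 2) <= cut ->
  2 <= cut + t * (2 * (A%:R - B%:R) * (D%:R - C%:R)).
Proof.
rewrite ler_norml => /andP[t_lo t_hi].
by case: A; case: B; case: C; case: D => /= cut_ge; lra.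
Qed.

Section FourCycle.
Variables (R : realType) (n : nat) (x : edge n -> R).
Hypothesis x_in : in_PSEP x.
Variables (a b c d : 'I_n) (eac ead ebc ebd : edge n).
Hypotheses (eacE : val eac = [set a; c]) (eadE : val ead = [set a; d]).
Hypotheses (ebcE : val ebc = [set b; c]) (ebdE : val ebd = [set b; d]).
Hypotheses (ab : a != b) (cd : c != d).
Hypothesis cycle_frac : {subset [:: eac; ead; ebc; ebd] <= frac_edges x}.
Hypothesis frac_nodes_sub : {subset frac_nodes x <= [:: a; b; c; d]}.

Definition alt_dir (e : edge n) : R :=
  (e == eac)%:R + (e == ebd)%:R - (e == ead)%:R - (e == ebc)%:R.

Lemma cut_val_alt_dir S :
  cut_val alt_dir S = 2 * ((a \in S)%:R - (b \in S)%:R) * ((d \in S)%:R - (c \in S)%:R).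
Proof.
rewrite /cut_val /alt_dir !sumrB big_split /= !sum_indicator.
rewrite (in_cut_pair S eacE) (in_cut_pair S ebdE) (in_cut_pair S eadE) (in_cut_pair S ebcE).
by case: (a \in S); case: (b \in S); case: (c \in S); case: (d \in S); rewrite /=; lra.
Qed.

Let ac : a != c := edge_pair_neq eacE.
Let ad : a != d := edge_pair_neq eadE.
Let bc : b != c := edge_pair_neq ebcE.
Let bd : b != d := edge_pair_neq ebdE.

Lemma cut_val_alt_dir1 v : cut_val alt_dir [set v] = 0.
Proof.
rewrite cut_val_alt_dir !inE.
have [<-|av] := eqVneq a v.
  by rewrite !(eq_sym _ a) (negbTE ac) (negbTE ad) subrr mulr0.
have [<-|bv] := eqVneq b v.
  by rewrite !(eq_sym _ b) (negbTE bc) (negbTE bd) subrr mulr0.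
by rewrite subrr mulr0 mul0r.
Qed.

Lemma alt_dir_out e : e \notin [:: eac; ead; ebc; ebd] -> alt_dir e = 0.
Proof.
rewrite /alt_dir !inE !negb_or => /and4P[/negbTE-> /negbTE-> /negbTE-> /negbTE->].
by rewrite addr0 !subr0.
Qed.

Lemma alt_dir_le1 e : `|alt_dir e| <= 1.
Proof.
have eac_ebd : eac != ebd.
  apply/eqP => eq; have : a \in val ebd by rewrite -eq eacE set21.
  by rewrite ebdE !inE (negbTE ab) (negbTE ad).
have ead_ebc : ead != ebc.
  apply/eqP => eq; have : a \in val ebc by rewrite -eq eadE set21.
  by rewrite ebcE !inE (negbTE ab) (negbTE ac).
have not_both f g : f != g -> ~~ ((e == f) && (e == g)).
  by move=> fg; apply: contra fg => /andP[/eqP<- /eqP<-].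
move: (not_both _ _ eac_ebd) (not_both _ _ ead_ebc); rewrite /alt_dir ler_norml.
by case: (e == eac); case: (e == ebd); case: (e == ead); case: (e == ebc) => //= _ _;
  apply/andP; split; lra.
Qed.

Section Slack.
Variable eps : R.
Hypothesis slack : forall e, e \in [:: eac; ead; ebc; ebd] -> eps <= x e /\ eps <= 1 - x e.

Lemma cycle_edge_cut_bound (S : {set 'I_n}) u v f :
  f \in [:: eac; ead; ebc; ebd] -> val f = [set u; v] -> u \in S -> v \in S ->
  (forall w, w \in [:: a; b; c; d] -> w \in S -> (w == u) || (w == v)) ->
  2 <= cut_val x S -> 2 + 2 * eps <= cut_val x S.
Proof.
move=> fC fE uS vS SW cut2; have [_ f_slack] := slack fC.
suff : 4 - 2 * x f <= cut_val x S by lra.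
apply: (cut_frac_pair_bound x_in (cycle_frac fC) fE uS vS _ cut2).
by move=> w /frac_nodes_sub; apply: SW.
Qed.

Lemma crossing_cut_bound (S : {set 'I_n}) : 2 <= cut_val x S ->
  (if ((a \in S) != (b \in S)) && ((c \in S) != (d \in S)) then 2 + 2 * eps else 2)
    <= cut_val x S.
Proof.
move=> cut2; case: ifP => // /andP[].
case aS: (a \in S); case bS: (b \in S); case cS: (c \in S); case dS: (d \in S) => //= _ _.
- apply: (cycle_edge_cut_bound _ eacE) => //; first by rewrite inE eqxx.
  by move=> w; rewrite !inE => /or4P[]/eqP->; rewrite ?aS ?bS ?cS ?dS ?eqxx ?orbT.
- apply: (cycle_edge_cut_bound _ eadE) => //; first by rewrite !inE eqxx orbT.
  by move=> w; rewrite !inE => /or4P[]/eqP->; rewrite ?aS ?bS ?cS ?dS ?eqxx ?orbT.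
- apply: (cycle_edge_cut_bound _ ebcE) => //; first by rewrite !inE eqxx !orbT.
  by move=> w; rewrite !inE => /or4P[]/eqP->; rewrite ?aS ?bS ?cS ?dS ?eqxx ?orbT.
- apply: (cycle_edge_cut_bound _ ebdE) => //; first by rewrite !inE eqxx !orbT.
  by move=> w; rewrite !inE => /or4P[]/eqP->; rewrite ?aS ?bS ?cS ?dS ?eqxx ?orbT.
Qed.

Lemma alt_perturb_in_PSEP t : `|t| <= eps -> in_PSEP (fun e => x e + t * alt_dir e).
Proof.
move=> t_le; have [x_deg x_cut x01] := x_in.
have cutE S : cut_val (fun e => x e + t * alt_dir e) S = cut_val x S + t * cut_val alt_dir S.
  by rewrite /cut_val big_split /= -mulr_sumr.
split=> [v|S S3 S4|e].
- by rewrite cutE cut_val_alt_dir1 x_deg mulr0 addr0.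
- rewrite cutE cut_val_alt_dir.
  exact: crossing_bound t_le (crossing_cut_bound (x_cut S S3 S4)).
- have /andP[x0 x1] := x01 e.
  have [eC|eC] := boolP (e \in [:: eac; ead; ebc; ebd]); last first.
    by rewrite alt_dir_out // mulr0 addr0 x0 x1.
  have [lo hi] := slack eC.
  have : `|t * alt_dir e| <= eps by rewrite normrM -[eps]mulr1 ler_pM ?alt_dir_le1.
  by rewrite ler_norml => /andP[? ?]; apply/andP; split; lra.
Qed.

End Slack.

Lemma four_cycle_not_vertex : ~ is_vertex_PSEP x.
Proof.
move=> xV; have [eps eps_gt0 slack] := frac_edges_slack cycle_frac.
have abs_eps : `|eps| <= eps by rewrite ger0_norm ?lexx // ltW.
have abs_neps : `|- eps| <= eps by rewrite normrN.
have dir0 := vertex_perturbation_eq0 xV (lt0r_neq0 eps_gt0)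
  (alt_perturb_in_PSEP slack abs_eps) (alt_perturb_in_PSEP slack abs_neps).
have := cut_val_alt_dir [set a; c]; rewrite /cut_val big1 => [|e _]; last exact: dir0.
rewrite !inE !eqxx orbT (eq_sym b) (negbTE ab) (negbTE bc) (eq_sym d) (negbTE ad).
by rewrite (eq_sym d) (negbTE cd) /=; lra.
Qed.

End FourCycle.

Lemma card_frac_nodes_neq4 (R : realType) (n : nat) (x : edge n -> R) :
  is_vertex_PSEP x -> #|frac_nodes x| != 4%N.
Proof.
move=> xV; apply/eqP => /(frac_nodes4_cycle xV.1)[a [b [c [d [ab cd W_sub ca cb]]]]].
have [eac eacF eacE] := frac_nbrsP _ _ _ (subsetP ca c (set21 c d)).
have [ead eadF eadE] := frac_nbrsP _ _ _ (subsetP ca d (set22 c d)).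
have [ebc ebcF ebcE] := frac_nbrsP _ _ _ (subsetP cb c (set21 c d)).
have [ebd ebdF ebdE] := frac_nbrsP _ _ _ (subsetP cb d (set22 c d)).
apply: (four_cycle_not_vertex xV.1 eacE eadE ebcE ebdE ab cd _ W_sub xV).
by move=> e; rewrite !in_cons in_nil orbF => /or4P[]/eqP->.
Qed.

Theorem mainTheorem2 (R : realType) (n : nat) (x : edge n -> R) :
  (3 <= n)%N -> is_vertex_PSEP x -> fractional x ->
  (n + 3 <= #|support_edges x|)%N.
Proof.
move=> _ xV xfrac; have x_in := xV.1.
have := card_frac_nodes_ge3 x_in (frac_nodes_neq0 x_in xfrac).
have := card_frac_nodes_neq3 x_in; have := card_frac_nodes_neq4 xV.
have := card_support_lb x_in.
lia.
Qed.
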